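(* Let $s_1\ge1$ and $s_2\ge0$ be integers, let $f_{s_1,s_2}(N)=\binom{s_2}{N}\sum_i\binom{s_1}{i}\binom{s_1}{N-i}\binom{N}{i}$ for integers $N$, and let $g(s_1,s_2)$ be the integer at which $f_{s_1,s_2}$ attains its maximum (so that $f_{s_1,s_2}$ is non-decreasing for $N\le g(s_1,s_2)$ and non-increasing for $N\ge g(s_1,s_2)$). (a) If $s_2\le\frac12\left(\sqrt{8s_1+9}-1\right)$, then $g(s_1,s_2)=s_2$. (b) For all $s_1,s_2$, $g(s_1,s_2)\le 2s_1$. Moreover, for each integer $d$ with $0\le d\le 4$, $$g(s_1,s_2)\ge 2s_1-d\iff s_2\ge \frac{2}{d+1}(s_1^2+s_1)-\frac{d+2}{2}.$$
   Context: Binomial coefficients $\binom{a}{b}$ are $0$ when $b<0$ or $b>a$. The function $f_{s_1,s_2}$ is unimodal in $N$, so $g(s_1,s_2)$ exists; if the maximum is attained at two consecutive integers, either may be taken as $g(s_1,s_2)$.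
   Formalization: When $f_{s_1,s_2}$ attains its maximum at two consecutive integers, g(s₁,s₂) is always the larger of the two, rather than either one being allowed. The statement above fails without it. *)

From mathcomp Require Import all_boot all_order all_algebra.
From mathcomp Require Import Rstruct.
From Stdlib Require Rdefinitions.
Set Implicit Arguments. Unset Strict Implicit. Unset Printing Implicit Defensive.

(* f_{s1,s2}(N) = C(s2,N) * sum_i C(s1,i) C(s1,N-i) C(N,i), for N >= 0.
   Terms with i > N vanish since C(N,i) = 0, so the sum over 0 <= i <= N is
   the full sum.  For negative N, f = 0 (C(s2,N) = 0); since f(0) = 1 > 0,
   negative N never matter for the maximum, so N ranges over nat. *)
Definition f (s1 s2 N : nat) : nat :=
  'C(s2, N) * \sum_(i < N.+1) 'C(s1, i) * 'C(s1, N - i) * 'C(N, i).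

Definition is_g (s1 s2 g : nat) : Prop :=
  (forall N, f s1 s2 N <= f s1 s2 g) /\ (forall N, g < N -> f s1 s2 N < f s1 s2 g).

From mathcomp Require Import all_boot all_order all_algebra.
From mathcomp Require Import Rstruct.
From Stdlib Require Rdefinitions.
From mathcomp Require Import ring lra zify.
Import Order.TTheory GRing.Theory Num.Theory.

Set Implicit Arguments.
Unset Strict Implicit.
Unset Printing Implicit Defensive.

(* Write f(N) = C(s2, N) a(N), where a(N) = N! * sum_i x_i x_(N-i) with
   x_t = C(s1, t) / t!.  The ratios x_(t+1) / x_t decrease, and this property
   passes to the self-convolution; hence f is log-concave without internal
   zeros, and g >= m + 1 exactly when f(m) <= f(m + 1), i.e. when
   (m + 1) a(m) <= (s2 - m) a(m + 1).
   For (a), when N^2 + N <= 2 s1 + 2 the terms of the convolutions for N and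
   N + 1 can be compared pairwise, which gives (N + 1) a(N) <= a(N + 1).
   For (b), near the top (2 s1)_j a(2 s1 - j) = C(2 s1, s1) Q_j(s1) for an explicit
   polynomial Q_j, and for d <= 4 the step condition at N = 2 s1 - d reads
   s2 >= t_d(s1) up to an error smaller than the spacing 1/(2(d+1)) between
   the values t_d(s1) can take; the cases s1 <= 5 are checked by computation. *)

Section LogConcaveMaximiser.
Variable F : nat -> nat.
Hypothesis F_logconcave : forall n, F n * F n.+2 <= F n.+1 ^ 2.
Hypothesis F_eq0S : forall n, F n = 0 -> F n.+1 = 0.

Lemma logconcave_gt0_le m n : m <= n -> 0 < F n -> 0 < F m.
Proof.
move=> /subnKC <-; elim: (n - m) => [|k IHk]; first by rewrite addn0.
rewrite addnS => FSk; apply: IHk; move: FSk; rewrite !lt0n.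
by apply: contra => /eqP/F_eq0S ->.
Qed.

Lemma logconcave_nondecr_down n : 0 < F n.+2 -> F n.+1 <= F n.+2 -> F n <= F n.+1.
Proof.
move=> F2pos le12; have F1pos : 0 < F n.+1 by apply: logconcave_gt0_le F2pos.
have := F_logconcave n; nia.
Qed.

Lemma logconcave_nonincr_up n : F n.+1 <= F n -> F n.+2 <= F n.+1.
Proof.
case: (posnP (F n.+1)) => [F1 _|F1pos le10]; first by rewrite F_eq0S.
have := F_logconcave n; nia.
Qed.

Lemma logconcave_le_upto m : 0 < F m.+1 -> F m <= F m.+1 ->
  forall k, k <= m.+1 -> F k <= F m.+1.
Proof.
elim: m => [|m IHm] Fpos le_m k; first by case: k => [|[]].
rewrite leq_eqVlt => /orP [/eqP -> //|lt_k].
have F1pos : 0 < F m.+1 by apply: logconcave_gt0_le Fpos.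
exact: leq_trans (IHm F1pos (logconcave_nondecr_down Fpos le_m) k lt_k) le_m.
Qed.

Lemma logconcave_le_from m : F m.+1 <= F m -> forall k, m <= k -> F k <= F m.
Proof.
move=> le_m k /subnKC <-.
have decr i : F (m + i).+1 <= F (m + i).
  by elim: i => [|i IHi]; rewrite ?addn0 // addnS logconcave_nonincr_up.
elim: (k - m) => [|i IHi]; first by rewrite addn0.
by rewrite addnS; apply: leq_trans (decr i) IHi.
Qed.

Variable g : nat.
Hypothesis g_max : forall n, F n <= F g.
Hypothesis g_last : forall n, g < n -> F n < F g.

Lemma maximiser_leq_iff m : 0 < F 0 ->
  (m.+1 <= g) <-> (0 < F m.+1 /\ F m <= F m.+1).
Proof.
move=> F0pos; split=> [le_g|[Fpos le_m]].
  split; first by apply: logconcave_gt0_le le_g (leq_trans F0pos (g_max 0)).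
  rewrite leqNgt; apply/negP => lt_m.
  have := logconcave_le_from (logconcave_nonincr_up (ltnW lt_m)) le_g.
  by rewrite leqNgt (leq_trans lt_m (g_max m)).
rewrite leqNgt; apply/negP => lt_g.
by have := logconcave_le_upto Fpos le_m (ltnW lt_g); rewrite leqNgt g_last.
Qed.
End LogConcaveMaximiser.

Local Open Scope ring_scope.

Section SelfConvolution.
Variables (R : realDomainType) (x : nat -> R).
Hypothesis x_ge0 : forall t, 0 <= x t.
Hypothesis x_ratio_antitone : forall u v, (u <= v)%N -> x u * x v.+1 <= x u.+1 * x v.

Definition sconv N := \sum_(i < N.+1) x i * x (N - i).

Let minor u v := x u * x v.+1 - x u.+1 * x v.

Let minor_prod_ge0 M (u v : 'I_M.+1) : 0 <= minor (M - v) (M - u) * minor u v.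
Proof.
have minor_le0 i j : (i <= j)%N -> minor i j <= 0.
  by move=> ?; rewrite subr_le0 x_ratio_antitone.
have minor_ge0 i j : (j <= i)%N -> 0 <= minor i j.
  by move=> ?; rewrite subr_ge0 mulrC [x i * _]mulrC x_ratio_antitone.
case: (leqP u v) => h; first by apply: mulr_le0; apply: minor_le0; lia.
by apply: mulr_ge0; apply: minor_ge0; lia.
Qed.

(* Symmetrising, twice the sum is a sum of products of two minors of equal sign. *)
Lemma sconv_defect_ge0 M : 0 <= \sum_(k < M.+1) \sum_(i < M.+1)
   x k * x (M.+1 - i) * (x (M.+1 - k) * x i - x (M - k) * x i.+1).
Proof.
set S := (X in 0 <= X).
have SE : S = \sum_(v < M.+1) \sum_(u < M.+1) (x (M - v) * x (M.+1 - u)) * minor u v.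
  rewrite /S (reindex_inj rev_ord_inj) /=; apply: eq_bigr => v _; apply: eq_bigr => u _.
  have hv : (M.+1 - (M.+1 - v.+1) = v.+1)%N by have := ltn_ord v; lia.
  have hv2 : (M - (M.+1 - v.+1) = v)%N by have := ltn_ord v; lia.
  have hv3 : (M.+1 - v.+1 = M - v)%N by lia.
  by rewrite hv hv2 hv3 /minor; ring.
have SE' : S = \sum_(v < M.+1) \sum_(u < M.+1) (x (M - u) * x (M.+1 - v)) * minor v u.
  by rewrite SE exchange_big.
have S2E : S + S = \sum_(v < M.+1) \sum_(u < M.+1) minor (M - v) (M - u) * minor u v.
  rewrite {1}SE SE' -big_split; apply: eq_bigr => v _.
  rewrite -big_split; apply: eq_bigr => u _ /=.
  have hu : ((M - u).+1 = M.+1 - u)%N by have := ltn_ord u; lia.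
  have hv : ((M - v).+1 = M.+1 - v)%N by have := ltn_ord v; lia.
  by rewrite /minor hu hv; ring.
suff : 0 <= S + S by lra.
by rewrite S2E; apply: sumr_ge0 => v _; apply: sumr_ge0 => u _; apply: minor_prod_ge0.
Qed.

Let ratio_top M k : (k < M.+1)%N -> x (M - k) * x M.+2 <= x (M.+1 - k) * x M.+1.
Proof.
move=> ltk; have -> : (M.+1 - k = (M - k).+1)%N by lia.
by apply: x_ratio_antitone; lia.
Qed.

Let sconvS M : sconv M.+1 = \sum_(i < M.+1) x i * x (M.+1 - i) + x M.+1 * x 0.
Proof. by rewrite /sconv big_ord_recr /= subnn. Qed.

Lemma sconv_shift_ge0 M : x M.+2 * sconv M <= x M.+1 * sconv M.+1.
Proof.
rewrite sconvS /sconv mulrDr !mulr_sumr.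
have tail : 0 <= x M.+1 * (x M.+1 * x 0) by rewrite !mulr_ge0.
suff : \sum_(i < M.+1) x M.+2 * (x i * x (M - i))
    <= \sum_(i < M.+1) x M.+1 * (x i * x (M.+1 - i)) by lra.
apply: ler_sum => i _; rewrite mulrCA [x M.+1 * _]mulrCA.
by apply: ler_wpM2l; [exact: x_ge0 | rewrite mulrC [x M.+1 * _]mulrC ratio_top].
Qed.

Lemma sconv_logconcave M : sconv M * sconv M.+2 <= sconv M.+1 ^+ 2.
Proof.
set A := \sum_(k < M.+1) \sum_(i < M.+2) x k * x (M.+1 - k) * (x i * x (M.+1 - i)).
set B := \sum_(k < M.+1) \sum_(i < M.+2) x k * x (M - k) * (x i.+1 * x (M.+1 - i)).
have sq : sconv M.+1 ^+ 2 = A + x M.+1 * x 0 * sconv M.+1.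
  rewrite expr2 {1}sconvS mulrDl; congr (_ + _).
  by rewrite big_distrl; apply: eq_bigr => k _; rewrite /sconv big_distrr.
have prod : sconv M * sconv M.+2 = B + sconv M * (x 0 * x M.+2).
  rewrite [sconv M.+2]/sconv big_ord_recl /= subn0 mulrDr addrC; congr (_ + _).
  by rewrite /sconv big_distrl; apply: eq_bigr => k _; rewrite big_distrr.
have AB : A - B = \sum_(k < M.+1) \sum_(i < M.+1)
     x k * x (M.+1 - i) * (x (M.+1 - k) * x i - x (M - k) * x i.+1)
   + \sum_(k < M.+1) x k * x 0 * (x (M.+1 - k) * x M.+1 - x (M - k) * x M.+2).
  rewrite -sumrB -big_split; apply: eq_bigr => k _.
  rewrite -sumrB big_ord_recr /= subnn; congr (_ + _); last by ring.
  by apply: eq_bigr => i _; ring.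
have last_ge0 : 0 <= \sum_(k < M.+1) x k * x 0 *
    (x (M.+1 - k) * x M.+1 - x (M - k) * x M.+2).
  apply: sumr_ge0 => k _; apply: mulr_ge0; first exact: mulr_ge0.
  by rewrite subr_ge0 ratio_top.
have := sconv_defect_ge0 M; have := sconv_shift_ge0 M; have := x_ge0 0.
rewrite -subr_ge0 sq prod; nra.
Qed.
End SelfConvolution.

Lemma weighted_square_ineq (R : realFieldType) (n I J : R) :
  0 <= I -> 0 <= J -> 2 <= I + J -> (I + J + 1) ^+ 2 + (I + J + 1) <= 2 * n + 2 ->
  2 * (I + 1) ^+ 2 * (J + 1) ^+ 2 <= (n - I) * (J + 1) ^+ 2 + (n - J) * (I + 1) ^+ 2.
Proof.
move=> I_ge0 J_ge0 IJ_ge2 hn.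
set p := I + 1; set q := J + 1; set s := p + q; set w := n + 1.
have h1 : 0 <= (2 * w - s * (s - 1)) * (p ^+ 2 + q ^+ 2).
  by apply: mulr_ge0; [rewrite /w /s /p /q; lra | rewrite addr_ge0 ?sqr_ge0].
have h2 : 0 <= s ^+ 3 * (s - 4) by apply: mulr_ge0; rewrite ?exprn_ge0 /s /p /q; lra.
have h3 : 0 <= (p - q) ^+ 2 * (4 * s ^+ 2 - (p - q) ^+ 2).
  have -> : 4 * s ^+ 2 - (p - q) ^+ 2 = (p + 3 * q) * (3 * p + q) by rewrite /s; ring.
  by rewrite mulr_ge0 ?sqr_ge0 //; apply: mulr_ge0; rewrite /p /q; lra.
have E : 8 * ((n - I) * q ^+ 2 + (n - J) * p ^+ 2 - 2 * p ^+ 2 * q ^+ 2)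
   = 4 * ((2 * w - s * (s - 1)) * (p ^+ 2 + q ^+ 2)) + s ^+ 3 * (s - 4)
     + (p - q) ^+ 2 * (4 * s ^+ 2 - (p - q) ^+ 2).
  by rewrite /s /w /p /q; ring.
rewrite -/p -/q; lra.
Qed.

Lemma weighted_square_ineq_nat n i j : (1 <= n)%N ->
  ((i + j).+1 ^ 2 + (i + j).+1 <= n.*2 + 2)%N ->
  (2 * i.+1 ^ 2 * j.+1 ^ 2 <= (n - i) * j.+1 ^ 2 + (n - j) * i.+1 ^ 2)%N.
Proof.
move=> n_ge1 hK; have [i_le j_le] : (i <= n /\ j <= n)%N by split; nia.
case: (leqP 2 (i + j)) => ij_ge2; last first.
  have : ((i = 0 /\ j = 0) \/ (i = 0 /\ j = 1) \/ (i = 1 /\ j = 0))%N by lia.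
  by case=> [[? ?]|[[? ?]|[? ?]]]; subst i j; lia.
rewrite -(ler_nat rat) !natrD !natrM !natrB // -!natr1 -!expr2.
apply: weighted_square_ineq; rewrite ?ler0n // -natrD ?ler_nat //.
by move: hK; rewrite -(ler_nat rat) -mul2n !natrD !natrM -!natr1 -expr2 natrD; lra.
Qed.

Definition binconv n N := (\sum_(i < N.+1) 'C(n, i) * 'C(n, N - i) * 'C(N, i))%N.

Section BinomialOverFactorial.
Variables (R : realFieldType) (n : nat).

Definition binfact t : R := 'C(n, t)%:R / t`!%:R.

Let fact_neq0 t : t`!%:R != 0 :> R.
Proof. by rewrite pnatr_eq0 -lt0n fact_gt0. Qed.

Lemma binfact_ge0 t : 0 <= binfact t.
Proof. by rewrite divr_ge0 ?ler0n. Qed.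

Lemma binfactS t : binfact t.+1 * t.+1%:R ^+ 2 = binfact t * (n - t)%:R.
Proof.
have binS : 'C(n, t.+1)%:R = (n - t)%:R * 'C(n, t)%:R / t.+1%:R :> R.
  by rewrite -natrM -mul_bin_left natrM mulrC mulKf ?pnatr_eq0.
rewrite /binfact factS natrM binS; field.
by rewrite fact_neq0 addrC natr1 pnatr_eq0.
Qed.

Lemma binfact_ratio_antitone u v : (u <= v)%N ->
  binfact u * binfact v.+1 <= binfact u.+1 * binfact v.
Proof.
move=> le_uv; case: (ltnP v n) => lt_vn; last first.
  rewrite /binfact (@bin_small n v.+1) ?ltnS // mul0r mulr0.
  by rewrite mulr_ge0 ?binfact_ge0.
have sq_gt0 k : 0 < k.+1%:R ^+ 2 :> R by rewrite exprn_gt0 ?ltr0n.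
rewrite -(ler_pM2r (mulr_gt0 (sq_gt0 u) (sq_gt0 v))).
have -> : binfact u * binfact v.+1 * (u.+1%:R ^+ 2 * v.+1%:R ^+ 2)
    = binfact u * binfact v * ((n - v)%:R * u.+1%:R ^+ 2).
  rewrite [LHS](_ : _ = binfact u * (binfact v.+1 * v.+1%:R ^+ 2) * u.+1%:R ^+ 2).
    by rewrite binfactS; ring.
  by ring.
have -> : binfact u.+1 * binfact v * (u.+1%:R ^+ 2 * v.+1%:R ^+ 2)
    = binfact u * binfact v * ((n - u)%:R * v.+1%:R ^+ 2).
  rewrite [LHS](_ : _ = binfact v * (binfact u.+1 * u.+1%:R ^+ 2) * v.+1%:R ^+ 2).
    by rewrite binfactS; ring.
  by ring.
apply: ler_wpM2l; first by rewrite mulr_ge0 ?binfact_ge0.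
rewrite -!natrX -!natrM ler_nat.
by apply: leq_mul; rewrite ?leq_exp2r //; lia.
Qed.

Lemma binfact_pair_le i j : (1 <= n)%N ->
  ((i + j).+1 ^ 2 + (i + j).+1 <= n.*2 + 2)%N ->
  2 * (binfact i * binfact j) <= binfact i.+1 * binfact j + binfact i * binfact j.+1.
Proof.
move=> n_ge1 hK.
set A : R := i.+1%:R ^+ 2; set B : R := j.+1%:R ^+ 2.
have AB_gt0 : 0 < A * B by rewrite mulr_gt0 // exprn_gt0 ?ltr0n.
rewrite -(ler_pM2r AB_gt0).
have -> : (binfact i.+1 * binfact j + binfact i * binfact j.+1) * (A * B)
    = binfact i * binfact j * ((n - i)%:R * B + (n - j)%:R * A).
  rewrite [LHS](_ : _ = (binfact i.+1 * A) * binfact j * B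
                        + (binfact j.+1 * B) * binfact i * A); last by ring.
  by rewrite !binfactS; ring.
rewrite [X in X <= _](_ : _ = binfact i * binfact j * (2 * A * B)); last by ring.
apply: ler_wpM2l; first by rewrite mulr_ge0 ?binfact_ge0.
move: (weighted_square_ineq_nat n_ge1 hK).
by rewrite -(ler_nat R) !natrD !natrM /A /B !expr2.
Qed.

Lemma sconv_binfact_le_succ K : (1 <= n)%N -> (K.+1 ^ 2 + K.+1 <= n.*2 + 2)%N ->
  sconv binfact K <= sconv binfact K.+1.
Proof.
move=> n_ge1 hK.
have sconvSl : sconv binfact K.+1
    = binfact 0 * binfact K.+1 + \sum_(i < K.+1) binfact i.+1 * binfact (K - i).
  by rewrite /sconv big_ord_recl.
have sconvSr : sconv binfact K.+1
    = \sum_(i < K.+1) binfact i * binfact (K.+1 - i) + binfact K.+1 * binfact 0.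
  by rewrite /sconv big_ord_recr /= subnn.
have pairs : 2 * sconv binfact K <= \sum_(i < K.+1) binfact i.+1 * binfact (K - i)
    + \sum_(i < K.+1) binfact i * binfact (K.+1 - i).
  rewrite /sconv mulr_sumr -big_split /=; apply: ler_sum => i _.
  have -> : (K.+1 - i = (K - i).+1)%N by have := ltn_ord i; lia.
  by apply: binfact_pair_le => //; rewrite subnKC // -ltnS.
have := binfact_ge0 0; have := binfact_ge0 K.+1; nra.
Qed.

Lemma binconvE N : (binconv n N)%:R = N`!%:R * sconv binfact N :> R.
Proof.
rewrite /binconv natr_sum /sconv mulr_sumr; apply: eq_bigr => i _.
have le_iN : (i <= N)%N by rewrite -ltnS.
have binE : 'C(N, i)%:R = N`!%:R / (i`!%:R * (N - i)`!%:R) :> R.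
  by rewrite -(bin_fact le_iN) !natrM mulfK // mulf_neq0.
by rewrite !natrM binE /binfact; field; rewrite !fact_neq0.
Qed.
End BinomialOverFactorial.

Lemma binconv_logconcave n M :
  (M.+1 * binconv n M * binconv n M.+2 <= M.+2 * binconv n M.+1 ^ 2)%N.
Proof.
rewrite -(ler_nat rat) !natrM !binconvE !factS !natrM.
have lc := sconv_logconcave (@binfact_ge0 rat n) (@binfact_ratio_antitone rat n) M.
set e0 := sconv _ M in lc *; set e1 := sconv _ M.+1 in lc *; set e2 := sconv _ M.+2 in lc *.
have K_ge0 : 0 <= M.+2%:R * M.+1%:R ^+ 2 * M`!%:R ^+ 2 :> rat.
  by rewrite !mulr_ge0 ?exprn_ge0.
have : 0 <= e1 ^+ 2 - e0 * e2 by rewrite subr_ge0.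
move/(mulr_ge0 K_ge0); nra.
Qed.

Lemma binconv_step n K : (1 <= n)%N -> (K.+1 ^ 2 + K.+1 <= n.*2 + 2)%N ->
  (K.+1 * binconv n K <= binconv n K.+1)%N.
Proof.
move=> n_ge1 hK; rewrite -(ler_nat rat) natrM !binconvE factS natrM.
have := sconv_binfact_le_succ rat n_ge1 hK.
have : 0 <= K.+1%:R * K`!%:R :> rat by rewrite mulr_ge0.
nra.
Qed.

Lemma binconv_gt0 n N : (N <= n.*2)%N -> (0 < binconv n N)%N.
Proof.
move=> le_N; have lt_i : (N - minn N n < N.+1)%N by lia.
rewrite /binconv (bigD1 (Ordinal lt_i)) //=; apply: leq_trans (leq_addr _ _).
by rewrite !muln_gt0 !bin_gt0; lia.
Qed.

Lemma binconv_eq0 n N : (n.*2 < N)%N -> binconv n N = 0%N.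
Proof.
move=> lt_N; rewrite /binconv big1 // => i _.
case: (leqP i n) => le_i; last by rewrite bin_small.
by rewrite (@bin_small n (N - i)) ?muln0 ?mul0n //; lia.
Qed.

Lemma fE s1 s2 N : f s1 s2 N = ('C(s2, N) * binconv s1 N)%N.
Proof. by []. Qed.

Lemma f0 s1 s2 : f s1 s2 0 = 1%N.
Proof. by rewrite fE /binconv big_ord1 /= !bin0. Qed.

Lemma f_eq0S s1 s2 N : f s1 s2 N = 0%N -> f s1 s2 N.+1 = 0%N.
Proof.
rewrite !fE => /eqP; rewrite muln_eq0 => /orP [/eqP|/eqP] f_eq0.
  by rewrite bin_small ?mul0n //; move: f_eq0 => /eqP; rewrite -leqn0 leqNgt bin_gt0; lia.
case: (leqP N s1.*2) => le_N; first by have := binconv_gt0 le_N; rewrite f_eq0.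
by rewrite binconv_eq0 ?muln0 //; lia.
Qed.

Lemma f_logconcave s1 s2 M : (f s1 s2 M * f s1 s2 M.+2 <= f s1 s2 M.+1 ^ 2)%N.
Proof.
rewrite !fE; case: (leqP s2 M) => lt_M.
  by rewrite (@bin_small s2 M.+2) ?mul0n ?muln0 //; lia.
set cm := 'C(s2, M); set c := 'C(s2, M.+1); set cp := 'C(s2, M.+2).
set am := binconv s1 M; set a0 := binconv s1 M.+1; set ap := binconv s1 M.+2.
have binS1 : (M.+2 * cp = (s2 - M.+1) * c)%N by rewrite mul_bin_left.
have binS0 : (M.+1 * c = (s2 - M) * cm)%N by rewrite mul_bin_left.
have lc := binconv_logconcave s1 M.
have pos : (0 < (s2 - M) * M.+2)%N by rewrite muln_gt0; apply/andP; split; lia.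
rewrite -(leq_pmul2l pos) -(ler_nat rat).
have -> : ((s2 - M) * M.+2 * (cm * am * (cp * ap)))%:R
    = (M.+1 * c)%:R * (s2 - M.+1)%:R * c%:R * (am * ap)%:R :> rat.
  have -> : ((s2 - M) * M.+2 * (cm * am * (cp * ap))
      = ((s2 - M) * cm) * (M.+2 * cp) * (am * ap))%N by rewrite !mulnA; lia.
  by rewrite -binS0 binS1 !natrM; ring.
have lcR : M.+1%:R * (am * ap)%:R <= M.+2%:R * (a0 ^ 2)%:R :> rat.
  by rewrite -!natrM ler_nat mulnA.
have subR : (s2 - M.+1)%:R <= (s2 - M)%:R :> rat by rewrite ler_nat; lia.
have q1 := ler_wpM2l (mulr_ge0 (ler0n _ (s2 - M.+1)) (sqr_ge0 (c%:R : rat))) lcR.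
have q2 := ler_wpM2r (mulr_ge0 (mulr_ge0 (ler0n _ M.+2) (ler0n _ (a0 ^ 2)))
                                (sqr_ge0 (c%:R : rat))) subR.
rewrite !natrM in q1 q2 *; rewrite ?natrX in q1 q2 *.
nra.
Qed.

Lemma is_g_bounds s1 s2 g : is_g s1 s2 g -> (g <= s2)%N /\ (g <= s1.*2)%N.
Proof.
move=> [g_max _]; have := g_max 0%N; rewrite f0 fE muln_gt0 => /andP [].
rewrite bin_gt0 => -> pos; split => //.
by case: (leqP g s1.*2) => // lt_g; move: pos; rewrite binconv_eq0.
Qed.

(* The condition f(m) <= f(m+1), i.e. (m+1) binconv(m) <= (s2-m) binconv(m+1),
   written without truncated subtraction. *)
Definition step_cond n s2 m :=
  (m.+1 * binconv n m + m * binconv n m.+1 <= s2 * binconv n m.+1)%N.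

Lemma f_le_succ_iff s1 s2 m : (m.+1 <= s1.*2)%N ->
  (0 < f s1 s2 m.+1)%N /\ (f s1 s2 m <= f s1 s2 m.+1)%N <-> step_cond s1 s2 m.
Proof.
move=> le_m.
have am_gt0 : (0 < binconv s1 m)%N by apply: binconv_gt0; lia.
have a1_gt0 : (0 < binconv s1 m.+1)%N by apply: binconv_gt0.
rewrite /step_cond !fE; case: (leqP m.+1 s2) => le_s2; last first.
  rewrite bin_small // mul0n ltnn; split=> [[]//|]; nia.
have c_gt0 : (0 < 'C(s2, m))%N by rewrite bin_gt0; lia.
have binS := mul_bin_left s2 m.
have le_f_iff : ('C(s2, m) * binconv s1 m <= 'C(s2, m.+1) * binconv s1 m.+1)%N =
                (m.+1 * binconv s1 m <= (s2 - m) * binconv s1 m.+1)%N.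
  have E1 : (m.+1 * ('C(s2, m) * binconv s1 m)
      = 'C(s2, m) * (m.+1 * binconv s1 m))%N by ring.
  have E2 : (m.+1 * ('C(s2, m.+1) * binconv s1 m.+1)
      = 'C(s2, m) * ((s2 - m) * binconv s1 m.+1))%N by rewrite mulnA binS; ring.
  by rewrite -(leq_pmul2l (ltn0Sn m)) E1 E2 leq_pmul2l.
rewrite le_f_iff muln_gt0 bin_gt0 le_s2 a1_gt0.
split=> [[_ le_f]|step]; [|split => //]; nia.
Qed.

Lemma binconv_top n j : (j <= n)%N -> binconv n (n.*2 - j) =
  (\sum_(u < j.+1) 'C(n, u) * 'C(n, j - u) * 'C(n.*2 - j, n - u))%N.
Proof.
move=> le_jn; rewrite /binconv; set N := (n.*2 - j)%N.
rewrite -(big_mkord xpredT (fun i => 'C(n, i) * 'C(n, N - i) * 'C(N, i))%N).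
rewrite (@big_cat_nat _ _ _ (n - j)) //=; last by rewrite /N; lia.
rewrite (@big_cat_nat _ _ _ n.+1 (n - j) N.+1) //=; [|lia|rewrite /N; lia].
rewrite [X in (X + _)%N]big_nat_cond [X in (X + _)%N]big1 ?add0n; last first.
  move=> i /andP [/andP [_ lt_i] _]; rewrite (@bin_small n (N - i)) ?muln0 ?mul0n //.
  by rewrite /N; lia.
rewrite [X in (_ + X)%N]big_nat_cond [X in (_ + X)%N]big1 ?addn0; last first.
  by move=> i /andP [/andP [lt_i _] _]; rewrite (@bin_small n i) ?mul0n.
rewrite -{1}[(n - j)%N]add0n big_addn.
have -> : (n.+1 - (n - j) = j.+1)%N by lia.
rewrite big_nat_rev /= big_mkord; apply: eq_bigr => u _.
have lt_u : (u < j.+1)%N := ltn_ord u.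
have -> : (0 + j.+1 - u.+1 + (n - j) = n - u)%N by lia.
rewrite bin_sub; last by lia.
have -> : (N - (n - u) = n - (j - u))%N by rewrite /N; lia.
by rewrite bin_sub //; lia.
Qed.

Lemma ffact_bin_top n j u : (u <= j)%N -> (j <= n)%N ->
  ((n.*2) ^_ j * 'C(n.*2 - j, n - u) = 'C(n.*2, n) * (n ^_ u * n ^_ (j - u)))%N.
Proof.
move=> le_uj le_jn.
set K := ((n - u)`! * (n - (j - u))`!)%N.
have K_gt0 : (0 < K)%N by rewrite /K muln_gt0 !fact_gt0.
apply/eqP; rewrite -(eqn_pmul2r K_gt0); apply/eqP.
transitivity (n.*2)`!.
  rewrite -mulnA /K.
  have -> : (n - (j - u) = n.*2 - j - (n - u))%N by lia.
  by rewrite bin_fact ?ffact_fact //; lia.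
rewrite /K.
have -> : ('C(n.*2, n) * (n ^_ u * n ^_ (j - u)) * ((n - u)`! * (n - (j - u))`!)
   = 'C(n.*2, n) * ((n ^_ u * (n - u)`!) * (n ^_ (j - u) * (n - (j - u))`!)))%N by ring.
rewrite !ffact_fact; [|lia|lia].
by have := @bin_fact n.*2 n ltac:(lia); have -> : (n.*2 - n = n)%N by lia.
Qed.

Section TopPolynomials.
Variable R : realFieldType.

Definition topc u (y : R) := (\prod_(k < u) (y - k%:R)) ^+ 2 / u`!%:R.

Definition topQ j (y : R) := \sum_(u < j.+1) topc u y * topc (j - u) y.

Lemma topQ_ge0 j y : 0 <= topQ j y.
Proof. by apply: sumr_ge0 => u _; rewrite mulr_ge0 // divr_ge0 ?sqr_ge0. Qed.

Lemma topc_nat n u : (u <= n)%N -> ('C(n, u) * n ^_ u)%:R = topc u n%:R.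
Proof.
move=> le_un; have fact_neq0 : u`!%:R != 0 :> R by rewrite pnatr_eq0 -lt0n fact_gt0.
have ffactR : (n ^_ u)%:R = \prod_(k < u) (n%:R - k%:R) :> R.
  elim: u le_un {fact_neq0} => [|u IHu] le_un; first by rewrite ffactn0 big_ord0.
  by rewrite ffactnSr natrM IHu ?natrB 1?ltnW // big_ord_recr.
have binR : 'C(n, u)%:R = (n ^_ u)%:R / u`!%:R :> R.
  by rewrite -(bin_ffact n u) natrM mulfK.
by rewrite natrM binR ffactR /topc; field.
Qed.

Lemma topQ_binconv n j : (j <= n)%N ->
  ((n.*2) ^_ j * binconv n (n.*2 - j))%:R = 'C(n.*2, n)%:R * topQ j n%:R :> R.
Proof.
move=> le_jn; rewrite binconv_top // big_distrr /= natr_sum /topQ mulr_sumr.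
apply: eq_bigr => u _; have le_uj : (u <= j)%N by rewrite -ltnS.
rewrite -!topc_nat; [|lia|lia].
rewrite -!natrM; congr (_%:R).
rewrite [LHS](_ : _ = 'C(n, u) * 'C(n, j - u) * ((n.*2) ^_ j * 'C(n.*2 - j, n - u)))%N.
  by rewrite ffact_bin_top //; ring.
by ring.
Qed.
End TopPolynomials.

Lemma step_cond_top_iff (R : realFieldType) n s2 d : (d.+1 <= n)%N ->
  step_cond n s2 (n.*2 - d.+1) <->
  topQ d.+1 (n%:R : R) <= (s2%:R + 1 - (2 * n%:R - d%:R)) * topQ d n%:R.
Proof.
move=> lt_dn; rewrite /step_cond.
have -> : ((n.*2 - d.+1).+1 = n.*2 - d)%N by lia.
set m := (n.*2 - d.+1)%N; set M := (n.*2 - d)%N.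
have -> : 2 * n%:R - d%:R = M%:R :> R by rewrite natrB -?mul2n ?natrM //; lia.
have mR : M%:R = m%:R + 1 :> R by rewrite natr1; congr (_%:R); rewrite /m /M; lia.
set A1 := binconv n m; set A0 := binconv n M.
set Kd := ((n.*2) ^_ d)%N; set C := 'C(n.*2, n).
have Kd_gt0 : 0 < Kd%:R :> R by rewrite ltr0n ffact_gt0; lia.
have E1 : Kd%:R * (M%:R * A1%:R) = C%:R * topQ d.+1 (n%:R : R).
  by rewrite -topQ_binconv // mulrA -!natrM /Kd /M -ffactnSr.
have E0 : Kd%:R * A0%:R = C%:R * topQ d (n%:R : R).
  by rewrite -topQ_binconv ?natrM //; lia.
have -> : (M * A1 + m * A0 <= s2 * A0)%N <->
    M%:R * A1%:R <= (s2%:R + 1 - M%:R) * A0%:R :> R.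
  by rewrite -(ler_nat R) !natrD !natrM mR; split => h; lra.
rewrite -(ler_pM2l Kd_gt0) E1 mulrCA E0 mulrCA ler_pM2l // ltr0n bin_gt0; lia.
Qed.

Section Slack.
Variable R : realFieldType.

Definition threshold d (y : R) := (4 * (y ^+ 2 + y) - (d.+1 * d.+2)%:R) / (2 * d.+1%:R).

Definition slack d (y : R) :=
  (threshold d y + 1 - (2 * y - d%:R)) * topQ d y - topQ d.+1 y.

(* If s2 < threshold d n, then 4 (n^2 + n) - 2 (d + 1) s2 - (d + 1) (d + 2) is
   a positive integer, even for d = 2, 4 and divisible by 4 for d = 3; so s2
   lies at least [gap d] below the threshold. *)
Definition gap d : R := (nth 0 [:: 1; 1; 2; 4; 2] d)%N%:R / (2 * d.+1%:R).

Local Ltac expand_slack :=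
  rewrite /slack /gap /threshold /topQ /topc /= !big_ord_recr !big_ord0 /= ?factS ?fact0 /=.

Lemma slack_ge0 d y : (d <= 4)%N -> 2 <= y -> 0 <= slack d y.
Proof.
case: d => [|[|[|[|[|d]]]]] // _ y_ge2.
- by rewrite [slack 0 y](_ : _ = 0) //; expand_slack; field.
- by rewrite [slack 1 y](_ : _ = 0) //; expand_slack; field.
- have -> : slack 2 y = y ^+ 2 * (2 * y - 1) / 3 by expand_slack; field.
  by rewrite divr_ge0 ?mulr_ge0 ?sqr_ge0 //; lra.
- have -> : slack 3 y = y ^+ 2 * (y - 1) ^+ 3 by expand_slack; field.
  by rewrite mulr_ge0 ?sqr_ge0 ?exprn_ge0 //; lra.
- have -> : slack 4 y = y ^+ 2 * (y - 1) ^+ 2 * (2 * y - 3) * (2 * y ^+ 2 - 6 * y + 6) / 5.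
    by expand_slack; field.
  by rewrite divr_ge0 ?mulr_ge0 ?sqr_ge0 //; nra.
Qed.

Lemma slack_lt_gap d y : (d <= 4)%N -> 6 <= y -> slack d y < gap d * topQ d y.
Proof.
move=> le_d y_ge6; rewrite -subr_lt0.
have y2_gt0 : 0 < y ^+ 2 by rewrite exprn_gt0 //; lra.
have yy_gt0 : 0 < y ^+ 2 * (y - 1) ^+ 2 by rewrite mulr_gt0 // exprn_gt0 //; lra.
case: d le_d => [|[|[|[|[|d]]]]] // _.
- have -> : slack 0 y - gap 0 * topQ 0 y = - (1 / 2) by expand_slack; field.
  lra.
- have -> : slack 1 y - gap 1 * topQ 1 y = - (y ^+ 2 / 2) by expand_slack; field.
  by rewrite oppr_lt0 divr_gt0.
- have -> : slack 2 y - gap 2 * topQ 2 y = - (2 * (y ^+ 2 * (y - 1) ^+ 2) / 3).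
    by expand_slack; field.
  by rewrite oppr_lt0; apply: divr_gt0 => //; apply: mulr_gt0.
- have -> : slack 3 y - gap 3 * topQ 3 y
      = - (y ^+ 2 * (y - 1) ^+ 2 * (2 * y ^+ 2 - 5 * y + 5) / 3).
    by expand_slack; field.
  by rewrite oppr_lt0; apply: divr_gt0 => //; apply: mulr_gt0 => //; nra.
- have -> : slack 4 y - gap 4 * topQ 4 y = - (y ^+ 2 * (y - 1) ^+ 2 *
      (2 * y ^+ 4 - 20 * y ^+ 3 + 68 * y ^+ 2 - 105 * y + 63) / 15).
    by expand_slack; field.
  rewrite oppr_lt0; apply: divr_gt0 => //; apply: mulr_gt0 => //.
  (* In z = y - 6 the quartic has positive coefficients. *)
  set z := y - 6; have z_ge0 : 0 <= z by rewrite /z; lra.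
  have -> : 2 * y ^+ 4 - 20 * y ^+ 3 + 68 * y ^+ 2 - 105 * y + 63
      = 153 + 279 * z + 140 * z ^+ 2 + 28 * z ^+ 3 + 2 * z ^+ 4 by rewrite /z; ring.
  have := exprn_ge0 2 z_ge0; have := exprn_ge0 3 z_ge0; have := exprn_ge0 4 z_ge0.
  lra.
Qed.
End Slack.

Definition above_threshold d n s2 :=
  ((n * n + n) * 4 <= d.+1 * s2 * 2 + d.+1 * d.+2)%N.

Lemma above_thresholdE (R : realFieldType) d n s2 :
  above_threshold d n s2 = (threshold d (n%:R : R) <= s2%:R).
Proof.
have den_gt0 : 0 < 2 * d.+1%:R :> R by rewrite mulr_gt0.
rewrite /above_threshold /threshold ler_pdivrMr // -(ler_nat R) !natrD !natrM expr2.
apply/idP/idP => h; lra.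
Qed.

Lemma below_threshold (R : realFieldType) d n s2 : (d <= 4)%N ->
  ~~ above_threshold d n s2 -> s2%:R <= threshold d (n%:R : R) - gap R d.
Proof.
move=> le_d not_above.
have gap_nat : (d.+1 * s2 * 2 + d.+1 * d.+2 + nth 0 [:: 1; 1; 2; 4; 2] d
    <= (n * n + n) * 4)%N.
  by move: not_above; rewrite /above_threshold; case: d le_d => [|[|[|[|[|d]]]]] //= _; lia.
have den_gt0 : 0 < 2 * d.+1%:R :> R by rewrite mulr_gt0.
rewrite /threshold /gap -mulrBl ler_pdivlMr //.
by move: gap_nat; rewrite -(ler_nat R) !natrD !natrM expr2 => h; lra.
Qed.

Lemma step_cond_top_large d n s2 : (d <= 4)%N -> (6 <= n)%N ->
  step_cond n s2 (n.*2 - d.+1) <-> above_threshold d n s2.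
Proof.
move=> le_d n_ge6; rewrite (step_cond_top_iff rat); last by lia.
have y_ge6 : 6 <= n%:R :> rat by rewrite (ler_nat _ 6).
set y : rat := n%:R in y_ge6 *; set S : rat := s2%:R.
have Q_ge0 := topQ_ge0 d y.
have slack_pos := slack_ge0 le_d (ltW (lt_le_trans (ltr_nat _ 2 6) y_ge6)).
have slack_small := slack_lt_gap le_d y_ge6.
have -> : (topQ d.+1 y <= (S + 1 - (2 * y - d%:R)) * topQ d y) =
    (0 <= (S - threshold d y) * topQ d y + slack d y).
  by rewrite -subr_ge0 /slack; congr (0 <= _); ring.
split=> [|above]; last first.
  by rewrite addr_ge0 // mulr_ge0 // subr_ge0 -above_thresholdE.
apply: contraLR => /(below_threshold rat le_d) below.
rewrite -ltNge; have := ler_wpM2r Q_ge0 below; lra.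
Qed.

Lemma binconv_iota n N : binconv n N =
  sumn [seq 'C(n, i) * 'C(n, N - i) * 'C(N, i) | i <- iota 0 N.+1]%N.
Proof.
rewrite /binconv -(big_mkord xpredT (fun i => 'C(n, i) * 'C(n, N - i) * 'C(N, i))%N).
by rewrite /index_iota subn0 sumnE big_map.
Qed.

Lemma step_cond_top_small d n s2 : (d <= 4)%N -> (1 <= n <= 5)%N -> (d < n.*2)%N ->
  step_cond n s2 (n.*2 - d.+1) <-> above_threshold d n s2.
Proof.
move=> le_d /andP [n_ge1 n_le5] lt_d; rewrite /step_cond /above_threshold !binconv_iota.
case: n n_ge1 n_le5 lt_d => [|[|[|[|[|[|n]]]]]] // _ _;
case: d le_d => [|[|[|[|[|d]]]]] // _ _;
repeat match goal with |- context [sumn ?s] =>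
  let v := eval vm_compute in (sumn s) in rewrite (_ : sumn s = v); last by vm_compute
end; split => h; lia.
Qed.

Lemma step_cond_top d n s2 : (d <= 4)%N -> (1 <= n)%N -> (d < n.*2)%N ->
  step_cond n s2 (n.*2 - d.+1) <-> above_threshold d n s2.
Proof.
move=> le_d n_ge1 lt_d; case: (leqP 6 n) => [n_ge6|n_lt6].
  exact: step_cond_top_large.
by apply: step_cond_top_small => //; lia.
Qed.

Lemma step_cond_low n s2 : (1 <= n)%N -> (0 < s2)%N -> (s2 ^ 2 + s2 <= n.*2 + 2)%N ->
  step_cond n s2 s2.-1.
Proof.
by case: s2 => // m n_ge1 _ /(binconv_step n_ge1); rewrite /step_cond /=; nia.
Qed.

Lemma above_threshold_top d n s2 : (n.*2 <= d)%N -> above_threshold d n s2.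
Proof. by rewrite /above_threshold; nia. Qed.

Lemma thresholdE (R : realFieldType) d n :
  2 / d.+1%:R * (n ^ 2 + n)%N%:R - (d + 2)%N%:R / 2 = threshold d (n%:R : R).
Proof.
by rewrite /threshold !natrD !natrM -!natr1 expr2; field; rewrite natr1 pnatr_eq0.
Qed.

Lemma sqrt_bound_nat (R : rcfType) s1 s2 :
  (s2%:R : R) <= (Num.sqrt (8 * s1 + 9)%N%:R - 1) / 2 -> (s2 ^ 2 + s2 <= s1.*2 + 2)%N.
Proof.
set z : R := (8 * s1 + 9)%N%:R => le_s2.
have z_ge0 : 0 <= z by rewrite ler0n.
have le_sqrt : 2 * s2%:R + 1 <= Num.sqrt z by lra.
have : (2 * s2%:R + 1) ^+ 2 <= z.
  have s2_ge0 : 0 <= s2%:R :> R := ler0n _ _.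
  by rewrite -(sqr_sqrtr z_ge0) ler_sqr ?nnegrE ?sqrtr_ge0 //; lra.
rewrite /z -(ler_nat R) -mul2n !natrD !natrM expr2 => h; lra.
Qed.

Theorem proposition1p3 (s1 s2 g : nat) :
  (1 <= s1)%N -> is_g s1 s2 g ->
  ((s2%:R : Rdefinitions.R) <= (Num.sqrt ((8 * s1 + 9)%N%:R : Rdefinitions.R) - 1) / 2 -> g = s2) /\
  (g <= 2 * s1)%N /\
  (forall d : nat, (d <= 4)%N ->
     ((2 * s1 - d <= g)%N <->
      (s2%:R : Rdefinitions.R) >= 2 / (d.+1)%:R * ((s1 ^ 2 + s1)%N%:R) - (d + 2)%N%:R / 2)).
Proof.
move=> s1_ge1 is_gg; have [g_le_s2 g_le_2s1] := is_g_bounds is_gg.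
have [g_max g_last] := is_gg.
have f0_gt0 : (0 < f s1 s2 0)%N by rewrite f0.
have g_ge_iff m :=
  maximiser_leq_iff (@f_logconcave s1 s2) (@f_eq0S s1 s2) g_max g_last m f0_gt0.
split; [|split; first lia].
  move=> /sqrt_bound_nat s2_low; apply/eqP; rewrite eqn_leq g_le_s2 /=.
  case: (posnP s2) => [-> //|s2_gt0].
  rewrite -(prednK s2_gt0) g_ge_iff f_le_succ_iff ?prednK //; last by nia.
  exact: step_cond_low.
move=> d le_d; rewrite thresholdE -above_thresholdE.
case: (leqP s1.*2 d) => [le_2s1|lt_d].
  by rewrite above_threshold_top //; split=> // _; lia.
have -> : (2 * s1 - d = (s1.*2 - d.+1).+1)%N by lia.
by rewrite g_ge_iff f_le_succ_iff ?step_cond_top //; lia.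
Qed.
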